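(* In the setting of the context (FSR scheme with direct flux reconstruction), let $\mathcal{E}_j=(\Phi_{j+1/2}-\Phi_{j-1/2})/h$ evaluated on exact nodal values. If $\kappa_3=\kappa-1$, then for arbitrary $\theta,\theta_3$, as $h\to0$ with derivatives at $x_j$, $$\mathcal{E}_j=\frac{\partial f}{\partial x}+\frac{3\theta-1}{12}\frac{\partial^3 f}{\partial x^3}h^2+\frac{15(\theta-\theta_3)-13}{240}\frac{\partial^5 f}{\partial x^5}h^4+\frac{\kappa-1}{32}\left[\frac{\partial D}{\partial x}\frac{\partial^5 u}{\partial x^5}+D(u(x_j))\frac{\partial^6 u}{\partial x^6}\right]h^5+O(h^6),$$ where $f$ denotes $f(u(x))$ and $\partial D/\partial x=\frac{d}{dx}D(u(x))$. In particular, with $\theta=1/3$ and $\theta_3=-8/15$ the scheme is fifth-order accurate, and sixth-order accurate if $D\equiv0$.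
   Context: Let $h>0$, uniform grid $x_i=ih$, $i\in\mathbb{Z}$. Let $u$ be a smooth real function of $x$, $u_i=u(x_i)$; let $f$ (flux) and $D$ (dissipation coefficient) be smooth real functions of one variable; $f_i=f(u_i)$. For nodal values $g_i$ define successive central differences $(g_x)_i=(g_{i+1}-g_{i-1})/(2h)$, $(g_{xx})_i=((g_x)_{i+1}-(g_x)_{i-1})/(2h)$, and for the face $i+1/2$ with $j=i$, $k=i+1$, define $T_j[g]=\frac h4((g_x)_k-(g_x)_j)-\frac{h^2}{4}(g_{xx})_j$, $T_k[g]=\frac h4((g_x)_k-(g_x)_j)-\frac{h^2}{4}(g_{xx})_k$. Reconstructed solution states (parameters $\kappa,\kappa_3$): $u_L=\kappa\frac{u_j+u_k}{2}+(1-\kappa)[u_j+\frac h2(u_x)_j]+\kappa_3T_j[u]$, $u_R=\kappa\frac{u_j+u_k}{2}+(1-\kappa)[u_k-\frac h2(u_x)_k]+\kappa_3T_k[u]$. Reconstructed fluxes (parameters $\theta,\theta_3$): $f_L=\theta\frac{f_j+f_k}{2}+(1-\theta)[f_j+\frac h2(f_x)_j]+\theta_3T_j[f]$, $f_R=\theta\frac{f_j+f_k}{2}+(1-\theta)[f_k-\frac h2(f_x)_k]+\theta_3T_k[f]$. Numerical flux: $\Phi_{i+1/2}=\frac12(f_L+f_R)-\frac12D_{i+1/2}(u_R-u_L)$, with $D_{i+1/2}=\bar D(u_i,u_{i+1})$ for a smooth symmetric $\bar D$ with $\bar D(v,v)=D(v)$. *)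

From Stdlib Require Import Reals ZArith.
From Coquelicot Require Import Coquelicot.
Open Scope R_scope.

Definition smooth1 (g : R -> R) : Prop :=
  forall (n : nat) (x : R), ex_derive_n g n x.

Definition pderiv2 (F : R -> R -> R) (n m : nat) (x y : R) : R :=
  Derive_n (fun s => Derive_n (fun t => F s t) m y) n x.

Definition smooth2 (F : R -> R -> R) : Prop :=
  forall (n m : nat) (x y : R),
    ex_derive_n (fun t => F x t) m y /\
    ex_derive_n (fun s => Derive_n (fun t => F s t) m y) n x /\
    continuous (fun p : R * R => pderiv2 F n m (fst p) (snd p)) (x, y).

Definition cdx (h : R) (g : Z -> R) (i : Z) : R :=
  (g (i + 1)%Z - g (i - 1)%Z) / (2 * h).

Definition cdxx (h : R) (g : Z -> R) (i : Z) : R :=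
  (cdx h g (i + 1)%Z - cdx h g (i - 1)%Z) / (2 * h).

(** Face i+1/2, with j = i and k = i+1. *)
Definition Tj (h : R) (g : Z -> R) (i : Z) : R :=
  h / 4 * (cdx h g (i + 1)%Z - cdx h g i) - h ^ 2 / 4 * cdxx h g i.

Definition Tk (h : R) (g : Z -> R) (i : Z) : R :=
  h / 4 * (cdx h g (i + 1)%Z - cdx h g i) - h ^ 2 / 4 * cdxx h g (i + 1)%Z.

(** Left / right reconstructions at face i+1/2 with parameters (a, a3)
    (a = kappa, a3 = kappa_3 for the solution; a = theta, a3 = theta_3
    for the flux). *)
Definition reconL (a a3 h : R) (g : Z -> R) (i : Z) : R :=
  a * ((g i + g (i + 1)%Z) / 2)
  + (1 - a) * (g i + h / 2 * cdx h g i)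
  + a3 * Tj h g i.

Definition reconR (a a3 h : R) (g : Z -> R) (i : Z) : R :=
  a * ((g i + g (i + 1)%Z) / 2)
  + (1 - a) * (g (i + 1)%Z - h / 2 * cdx h g (i + 1)%Z)
  + a3 * Tk h g i.

(** Numerical flux Phi_{i+1/2} for nodal solution values ug. *)
Definition numflux (f : R -> R) (Dbar : R -> R -> R)
    (kappa kappa3 theta theta3 h : R) (ug : Z -> R) (i : Z) : R :=
  let fg := fun m => f (ug m) in
  (reconL theta theta3 h fg i + reconR theta theta3 h fg i) / 2
  - Dbar (ug i) (ug (i + 1)%Z) / 2
    * (reconR kappa kappa3 h ug i - reconL kappa kappa3 h ug i).

(** Exact nodal values of u on the grid of spacing h whose node of
    index 0 is the point x (i.e. x_j = x with j = 0, x_i = x + i h). *)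
Definition nodal (u : R -> R) (x h : R) : Z -> R :=
  fun m => u (x + IZR m * h).

Definition residual (u f : R -> R) (Dbar : R -> R -> R)
    (kappa kappa3 theta theta3 x h : R) : R :=
  (numflux f Dbar kappa kappa3 theta theta3 h (nodal u x h) 0%Z
   - numflux f Dbar kappa kappa3 theta theta3 h (nodal u x h) (-1)%Z) / h.

Definition bigO_h (e : R -> R) (p : nat) : Prop :=
  exists C delta : R, 0 < delta /\
    forall h : R, 0 < h < delta -> Rabs (e h) <= C * h ^ p.

(* With kappa3 = kappa - 1 the solution jump u_R - u_L at a face is (1 - kappa)/16
   times the fifth undivided difference of the nodal values, and the difference of
   the averaged flux reconstructions at the two faces of cell j is a fixed
   antisymmetric seven-point stencil acting on f(u_{j+m}).  On degree-6 Taylor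
   polynomials at x_j these stencils produce the stated expansion exactly (the fifth
   difference centred at x_{j +- 1/2} is h^5 u^(5) +- h^6 u^(6) / 2).  The Taylor
   remainders, together with Dbar(u_j, u_{j +- 1}) = D(u_j) +- (h/2) (D o u)'(x_j)
   + O(h^2), contribute O(h^7) to h times the error; the latter expansion holds
   because symmetry of Dbar gives D' = 2 d_2 Dbar on the diagonal. *)

From Stdlib Require Import Reals ZArith Lra Lia.
From Coquelicot Require Import Coquelicot.
Open Scope R_scope.

Lemma bigO_h_ext e1 e2 p :
  (forall h, 0 < h -> e1 h = e2 h) -> bigO_h e2 p -> bigO_h e1 p.
Proof.
  intros E [C [d [Hd H]]]. exists C, d. split; [exact Hd|].
  intros h Hh. rewrite E by lra. now apply H.
Qed.

Lemma bigO_h_nonneg e p : bigO_h e p ->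
  exists C d, 0 <= C /\ 0 < d /\ forall h, 0 < h < d -> Rabs (e h) <= C * h ^ p.
Proof.
  intros [C [d [Hd H]]]. exists (Rabs C), d. split; [apply Rabs_pos|split; [exact Hd|]].
  intros h Hh. eapply Rle_trans; [now apply H|].
  apply Rmult_le_compat_r; [apply pow_le; lra|apply RRle_abs].
Qed.

Lemma bigO_h_plus e1 e2 p :
  bigO_h e1 p -> bigO_h e2 p -> bigO_h (fun h => e1 h + e2 h) p.
Proof.
  intros H1 H2.
  apply bigO_h_nonneg in H1 as [C1 [d1 [_ [Hd1 H1]]]].
  apply bigO_h_nonneg in H2 as [C2 [d2 [_ [Hd2 H2]]]].
  exists (C1 + C2), (Rmin d1 d2). split; [now apply Rmin_pos|].
  intros h Hh.
  assert (h < d1) by (eapply Rlt_le_trans; [apply Hh|apply Rmin_l]).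
  assert (h < d2) by (eapply Rlt_le_trans; [apply Hh|apply Rmin_r]).
  eapply Rle_trans; [apply Rabs_triang|].
  specialize (H1 h ltac:(lra)). specialize (H2 h ltac:(lra)). lra.
Qed.

Lemma bigO_h_scal c e p : bigO_h e p -> bigO_h (fun h => c * e h) p.
Proof.
  intros H. apply bigO_h_nonneg in H as [C [d [_ [Hd H]]]].
  exists (Rabs c * C), d. split; [exact Hd|]. intros h Hh.
  rewrite Rabs_mult, Rmult_assoc. apply Rmult_le_compat_l; [apply Rabs_pos|now apply H].
Qed.

Lemma bigO_h_minus e1 e2 p :
  bigO_h e1 p -> bigO_h e2 p -> bigO_h (fun h => e1 h - e2 h) p.
Proof.
  intros H1 H2. apply bigO_h_ext with (fun h => e1 h + (-1) * e2 h); [intros; ring|].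
  now apply bigO_h_plus, bigO_h_scal.
Qed.

Lemma bigO_h_mult e1 e2 p q :
  bigO_h e1 p -> bigO_h e2 q -> bigO_h (fun h => e1 h * e2 h) (p + q).
Proof.
  intros H1 H2.
  apply bigO_h_nonneg in H1 as [C1 [d1 [HC1 [Hd1 H1]]]].
  apply bigO_h_nonneg in H2 as [C2 [d2 [HC2 [Hd2 H2]]]].
  exists (C1 * C2), (Rmin d1 d2). split; [now apply Rmin_pos|].
  intros h Hh.
  assert (h < d1) by (eapply Rlt_le_trans; [apply Hh|apply Rmin_l]).
  assert (h < d2) by (eapply Rlt_le_trans; [apply Hh|apply Rmin_r]).
  rewrite Rabs_mult, pow_add.
  replace (C1 * C2 * (h ^ p * h ^ q)) with (C1 * h ^ p * (C2 * h ^ q)) by ring.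
  apply Rmult_le_compat; try apply Rabs_pos; [apply H1|apply H2]; lra.
Qed.

Lemma bigO_h_pow k : bigO_h (fun h => h ^ k) k.
Proof.
  exists 1, 1. split; [lra|]. intros h Hh.
  rewrite Rabs_right by (apply Rle_ge, pow_le; lra). lra.
Qed.

Lemma bigO_h_le e p q : (q <= p)%nat -> bigO_h e p -> bigO_h e q.
Proof.
  intros Hqp H. apply bigO_h_nonneg in H as [C [d [HC [Hd H]]]].
  exists C, (Rmin d 1). split; [apply Rmin_pos; lra|].
  intros h Hh.
  assert (h < d) by (eapply Rlt_le_trans; [apply Hh|apply Rmin_l]).
  assert (h < 1) by (eapply Rlt_le_trans; [apply Hh|apply Rmin_r]).
  eapply Rle_trans; [apply H; lra|]. apply Rmult_le_compat_l; [exact HC|].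
  replace p with (q + (p - q))%nat by lia. rewrite pow_add.
  rewrite <- (Rmult_1_r (h ^ q)) at 2.
  apply Rmult_le_compat_l; [apply pow_le; lra|].
  rewrite <- (pow1 (p - q)). apply pow_incr. lra.
Qed.

Lemma bigO_h_monomial c k p : (p <= k)%nat -> bigO_h (fun h => c * h ^ k) p.
Proof. intros Hp. apply bigO_h_scal, (bigO_h_le _ k); [exact Hp|apply bigO_h_pow]. Qed.

Lemma bigO_h_div e p : bigO_h e (S p) -> bigO_h (fun h => e h / h) p.
Proof.
  intros H. apply bigO_h_nonneg in H as [C [d [_ [Hd H]]]].
  exists C, d. split; [exact Hd|]. intros h Hh.
  unfold Rdiv. rewrite Rabs_mult, Rabs_inv, (Rabs_right h) by lra.
  apply Rmult_le_reg_r with h; [lra|].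
  rewrite Rmult_assoc, Rinv_l, Rmult_1_r by lra.
  eapply Rle_trans; [now apply H|]. simpl. lra.
Qed.

Lemma bigO_h_mult_approx a a0 b b0 p r :
  bigO_h a0 0 -> bigO_h (fun h => a h - a0 h) p ->
  bigO_h b0 r -> bigO_h (fun h => b h - b0 h) (p + r) ->
  bigO_h (fun h => a h * b h - a0 h * b0 h) (p + r).
Proof.
  intros Ha0 Ha Hb0 Hb.
  assert (Ha_bounded : bigO_h a 0).
  { apply bigO_h_ext with (fun h => (a h - a0 h) + a0 h); [intros; ring|].
    apply bigO_h_plus; [|exact Ha0]. apply (bigO_h_le _ p); [lia|exact Ha]. }
  apply bigO_h_ext with (fun h => a h * (b h - b0 h) + (a h - a0 h) * b0 h);
    [intros; ring|].
  apply bigO_h_plus; [exact (bigO_h_mult _ _ 0 _ Ha_bounded Hb)|].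
  now apply bigO_h_mult.
Qed.

Definition ex_derive_upto (n : nat) (g : R -> R) : Prop :=
  forall x k, (k <= n)%nat -> ex_derive_n g k x.

Lemma Derive_n_Derive g k x : Derive_n (Derive g) k x = Derive_n g (S k) x.
Proof.
  revert x. induction k as [|k IH]; intros x; [reflexivity|].
  apply Derive_ext. exact IH.
Qed.

Lemma ex_derive_upto_ext n f g :
  (forall t, f t = g t) -> ex_derive_upto n f -> ex_derive_upto n g.
Proof. intros E H x k Hk. eapply ex_derive_n_ext; [exact E|now apply H]. Qed.

Lemma ex_derive_upto_le n m g :
  (m <= n)%nat -> ex_derive_upto n g -> ex_derive_upto m g.
Proof. intros Hm H x k Hk. apply H. lia. Qed.

Lemma ex_derive_upto_S n g :
  ex_derive_upto (S n) g <-> (forall x, ex_derive g x) /\ ex_derive_upto n (Derive g).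
Proof.
  split.
  - intros H. split; [intros x; exact (H x 1%nat ltac:(lia))|].
    intros x [|k] Hk; [exact I|]. simpl.
    eapply ex_derive_ext; [intros t; symmetry; apply Derive_n_Derive|].
    exact (H x (S (S k)) ltac:(lia)).
  - intros [H1 H2] x [|[|k]] Hk; [exact I|exact (H1 x)|]. simpl.
    eapply ex_derive_ext; [intros t; apply Derive_n_Derive|].
    exact (H2 x (S k) ltac:(lia)).
Qed.

Lemma ex_derive_upto_plus n a b :
  ex_derive_upto n a -> ex_derive_upto n b -> ex_derive_upto n (fun t => a t + b t).
Proof.
  intros Ha Hb x k Hk.
  apply ex_derive_n_plus; apply filter_forall; intros y j Hj;
    [apply Ha|apply Hb]; lia.
Qed.

Lemma ex_derive_upto_mult n : forall a b,
  ex_derive_upto n a -> ex_derive_upto n b -> ex_derive_upto n (fun t => a t * b t).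
Proof.
  induction n as [|n IH]; intros a b Ha Hb.
  - intros x k Hk. replace k with 0%nat by lia. exact I.
  - apply ex_derive_upto_S in Ha as Ha'. destruct Ha' as [Ha1 Ha2].
    apply ex_derive_upto_S in Hb as Hb'. destruct Hb' as [Hb1 Hb2].
    apply ex_derive_upto_S. split; [intros x; now apply ex_derive_mult|].
    apply ex_derive_upto_ext with (fun t => Derive a t * b t + a t * Derive b t).
    { intros t. now rewrite Derive_mult. }
    apply ex_derive_upto_plus; apply IH; try assumption;
      eapply ex_derive_upto_le; [|exact Hb| |exact Ha]; lia.
Qed.

Lemma ex_derive_upto_comp n : forall f u,
  ex_derive_upto n f -> ex_derive_upto n u -> ex_derive_upto n (fun t => f (u t)).
Proof.
  induction n as [|n IH]; intros f u Hf Hu.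
  - intros x k Hk. replace k with 0%nat by lia. exact I.
  - apply ex_derive_upto_S in Hf as Hf'. destruct Hf' as [Hf1 Hf2].
    apply ex_derive_upto_S in Hu as Hu'. destruct Hu' as [Hu1 Hu2].
    apply ex_derive_upto_S. split; [intros x; now apply ex_derive_comp|].
    apply ex_derive_upto_ext with (fun t => Derive u t * Derive f (u t)).
    { intros t. symmetry. now apply Derive_comp. }
    apply ex_derive_upto_mult; [exact Hu2|].
    apply IH; [exact Hf2|]. eapply ex_derive_upto_le; [|exact Hu]. lia.
Qed.

Lemma smooth1_comp f u : smooth1 f -> smooth1 u -> smooth1 (fun t => f (u t)).
Proof.
  intros Hf Hu n x.
  apply (ex_derive_upto_comp n); [intros y k _; apply Hf|intros y k _; apply Hu|lia].
Qed.

Definition taylor_poly (d : nat -> R) (n : nat) (t : R) : R :=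
  sum_f_R0 (fun m => t ^ m / INR (fact m) * d m) n.

Lemma taylor_poly_0 d n : taylor_poly d n 0 = d 0%nat.
Proof.
  unfold taylor_poly. induction n as [|n IH]; cbn [sum_f_R0]; [simpl; field|].
  rewrite IH, pow_i by lia. unfold Rdiv. ring.
Qed.

Lemma Taylor_Lagrange_two_sided G n x t : smooth1 G ->
  exists z, Rabs (z - x) <= Rabs t /\
    G (x + t) - taylor_poly (fun k => Derive_n G k x) n t
    = t ^ S n / INR (fact (S n)) * Derive_n G (S n) z.
Proof.
  intros HG. destruct (total_order_T t 0) as [[Hneg|Hzero]|Hpos].
  - set (H := fun s => G (- s)).
    assert (HH : forall k s, Derive_n H k s = (-1) ^ k * Derive_n G k (- s)).
    { intros k s. apply Derive_n_comp_opp, filter_forall. intros; apply HG. }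
    assert (Hsign : forall k, (- t) ^ k * (-1) ^ k = t ^ k).
    { intros k. rewrite <- Rpow_mult_distr. f_equal. ring. }
    destruct (Taylor_Lagrange H n (- x) (- x - t)) as [z [Hz E]]; [lra| |].
    { intros s _ k _. apply ex_derive_n_comp_opp, filter_forall. intros; apply HG. }
    exists (- z). split; [rewrite !Rabs_left; lra|].
    unfold H at 1 in E. replace (- (- x - t)) with (x + t) in E by ring.
    replace (- x - t - - x) with (- t) in E by ring.
    rewrite E, HH, <- (Hsign (S n)). unfold taylor_poly.
    replace (sum_f_R0 _ n) with (sum_f_R0 (fun m => t ^ m / INR (fact m) * Derive_n G m x) n).
    + unfold Rdiv. ring.
    + apply sum_eq. intros m _. rewrite HH, Ropp_involutive, <- (Hsign m).
      unfold Rdiv. ring.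
  - subst t. exists x. rewrite Rminus_diag, Rabs_R0, Rplus_0_r, taylor_poly_0.
    split; [lra|]. rewrite pow_i by lia. unfold Rdiv. simpl. ring.
  - destruct (Taylor_Lagrange G n x (x + t)) as [z [Hz E]]; [lra|intros; apply HG|].
    exists z. rewrite !Rabs_right by lra. split; [lra|].
    replace (x + t - x) with t in E by ring. rewrite E. unfold taylor_poly. ring.
Qed.

Lemma Derive_n_bounded_near G k x : smooth1 G ->
  exists M, forall z, Rabs (z - x) <= 1 -> Rabs (Derive_n G k z) <= M.
Proof.
  intros HG.
  destruct (continuity_ab_maj (fun z => Rabs (Derive_n G k z)) (x - 1) (x + 1))
    as [zmax [Hmax _]]; [lra| |].
  { intros z _. apply (continuity_pt_comp (Derive_n G k) Rabs);
      [|apply Rcontinuity_abs].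
    apply derivable_continuous_pt, ex_derive_Reals_0, (HG (S k) z). }
  exists (Rabs (Derive_n G k zmax)). intros z Hz.
  apply Hmax. apply Rabs_le_between in Hz. lra.
Qed.

Lemma taylor_poly_bigO G n c x : smooth1 G ->
  bigO_h (fun h => G (x + c * h) - taylor_poly (fun k => Derive_n G k x) n (c * h)) (S n).
Proof.
  intros HG. destruct (Derive_n_bounded_near G (S n) x HG) as [M HM].
  exists (Rabs c ^ S n * M), (/ (Rabs c + 1)).
  pose proof (Rabs_pos c) as Hc.
  split; [apply Rinv_0_lt_compat; lra|]. intros h [Hh0 Hh1].
  assert (Hch : Rabs (c * h) <= 1).
  { rewrite Rabs_mult, (Rabs_right h) by lra.
    apply Rmult_lt_compat_r with (r := Rabs c + 1) in Hh1; [|lra].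
    rewrite Rinv_l in Hh1 by lra. nra. }
  destruct (Taylor_Lagrange_two_sided G n x (c * h) HG) as [z [Hz E]].
  rewrite E.
  pose proof (INR_fact_lt_0 (S n)) as Hfact.
  assert (Hfact1 : / INR (fact (S n)) <= 1).
  { rewrite <- Rinv_1. apply Rinv_le_contravar; [lra|].
    apply (le_INR 1), lt_O_fact. }
  unfold Rdiv. rewrite !Rabs_mult, <- RPow_abs, Rabs_mult, (Rabs_right h) by lra.
  rewrite Rabs_inv, (Rabs_right (INR _)) by lra. rewrite Rpow_mult_distr.
  replace (Rabs c ^ S n * M * h ^ S n) with (Rabs c ^ S n * h ^ S n * M) by ring.
  rewrite Rmult_assoc. apply Rmult_le_compat_l.
  { apply Rmult_le_pos; apply pow_le; lra. }
  assert (Rabs (Derive_n G (S n) z) <= M) by (apply HM; lra).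
  pose proof (Rabs_pos (Derive_n G (S n) z)).
  assert (0 < / INR (fact (S n))) by (apply Rinv_0_lt_compat; lra).
  nra.
Qed.

Section SymmetricDiagonal.

Variables (Dbar : R -> R -> R) (D : R -> R).
Hypothesis HDbar : smooth2 Dbar.
Hypothesis Hsym : forall a b, Dbar a b = Dbar b a.
Hypothesis Hdiag : forall v, Dbar v v = D v.

Let d2Dbar s t := Derive (fun t' => Dbar s t') t.

Lemma smooth1_Dbar_r a : smooth1 (fun t => Dbar a t).
Proof. intros n t. exact (proj1 (HDbar 0%nat n a t)). Qed.

Let Dbar_mvt_r s a h :
  exists c, Rabs (c - a) <= Rabs h /\ Dbar s (a + h) - Dbar s a = d2Dbar s c * h.
Proof.
  destruct (MVT_cor4 (fun t => Dbar s t) (d2Dbar s) a (Rabs h)) with (b := a + h)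
    as [c [E Hc]].
  - intros c _. apply Derive_correct, (smooth1_Dbar_r s 1%nat).
  - replace (a + h - a) with h by ring. lra.
  - exists c. replace (a + h - a) with h in E, Hc by ring. now split.
Qed.

(* On the diagonal both arguments move, and by symmetry each contributes [d2Dbar a a]. *)
Lemma is_derive_Dbar_diag a : is_derive D a (2 * Derive (fun t => Dbar a t) a).
Proof.
  assert (Hcont : continuity_2d_pt d2Dbar a a).
  { apply continuity_2d_pt_filterlim. exact (proj2 (proj2 (HDbar 0%nat 1%nat a a))). }
  apply is_derive_Reals. intros eps Heps.
  destruct (Hcont (mkposreal (eps / 2) ltac:(lra))) as [delta Hdelta]. simpl in Hdelta.
  exists delta. intros h Hh0 Hh.
  destruct (Dbar_mvt_r (a + h) a h) as [c1 [Hc1 E1]].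
  destruct (Dbar_mvt_r a a h) as [c2 [Hc2 E2]].
  assert (E : D (a + h) - D a = h * (d2Dbar (a + h) c1 + d2Dbar a c2)).
  { rewrite <- !Hdiag. rewrite (Hsym (a + h) a) in E1. lra. }
  replace ((D (a + h) - D a) / h) with (d2Dbar (a + h) c1 + d2Dbar a c2)
    by (rewrite E; field; exact Hh0).
  assert (A1 : Rabs (d2Dbar (a + h) c1 - d2Dbar a a) < eps / 2).
  { apply Hdelta; [replace (a + h - a) with h by ring|]; lra. }
  assert (A2 : Rabs (d2Dbar a c2 - d2Dbar a a) < eps / 2).
  { apply Hdelta; [rewrite Rminus_diag, Rabs_R0; apply cond_pos|lra]. }
  change (Derive (fun t => Dbar a t) a) with (d2Dbar a a).
  replace (d2Dbar (a + h) c1 + d2Dbar a c2 - 2 * d2Dbar a a)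
    with ((d2Dbar (a + h) c1 - d2Dbar a a) + (d2Dbar a c2 - d2Dbar a a)) by ring.
  eapply Rle_lt_trans; [apply Rabs_triang|lra].
Qed.

Lemma Dbar_comp_bigO (u : R -> R) (Hu : smooth1 u) x c :
  bigO_h (fun h => Dbar (u x) (u (x + c * h))
                   - (D (u x) + c * h * (Derive (fun y => D (u y)) x / 2))) 2.
Proof.
  set (psi := fun y => Dbar (u x) (u y)).
  assert (Hpsi : smooth1 psi) by exact (smooth1_comp _ _ (smooth1_Dbar_r (u x)) Hu).
  assert (Hpsi' : Derive psi x = Derive (fun y => D (u y)) x / 2).
  { pose proof (is_derive_Dbar_diag (u x)) as HD'.
    assert (Hu1 : ex_derive u x) by exact (Hu 1%nat x).
    unfold psi.
    rewrite (Derive_comp (fun t => Dbar (u x) t) u x) by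
      first [exact Hu1|exact (smooth1_Dbar_r (u x) 1%nat (u x))].
    rewrite (Derive_comp D u x) by first [exact Hu1|eexists; exact HD'].
    rewrite (is_derive_unique _ _ _ HD'). field. }
  eapply bigO_h_ext; [|exact (taylor_poly_bigO psi 1 c x Hpsi)].
  intros h _. unfold taylor_poly, sum_f_R0.
  change (Derive_n psi 1 x) with (Derive psi x). change (Derive_n psi 0 x) with (psi x).
  change (INR (fact 0)) with 1. change (INR (fact 1)) with 1.
  rewrite Hpsi'. unfold psi. rewrite Hdiag. field.
Qed.

End SymmetricDiagonal.

Definition flux_stencil (theta theta3 : R) (g : Z -> R) : R :=
  (3 / 4 - theta / 4 - 5 * theta3 / 32) * (g 1%Z - g (-1)%Z)
  + (theta + theta3 - 1) / 8 * (g 2%Z - g (-2)%Z)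
  - theta3 / 32 * (g 3%Z - g (-3)%Z).

Lemma recon_average_difference theta theta3 h g : h <> 0 ->
  (reconL theta theta3 h g 0 + reconR theta theta3 h g 0) / 2
  - (reconL theta theta3 h g (-1) + reconR theta theta3 h g (-1)) / 2
  = flux_stencil theta theta3 g.
Proof.
  intros Hh. unfold reconR, reconL, Tj, Tk, cdxx, cdx, flux_stencil.
  simpl Z.add. simpl Z.sub. field. exact Hh.
Qed.

Definition fifth_difference (g : Z -> R) (i : Z) : R :=
  g (i + 3)%Z - 5 * g (i + 2)%Z + 10 * g (i + 1)%Z - 10 * g i
  + 5 * g (i - 1)%Z - g (i - 2)%Z.

Lemma recon_jump_fifth_difference kappa h g i : h <> 0 ->
  reconR kappa (kappa - 1) h g i - reconL kappa (kappa - 1) h g i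
  = (1 - kappa) / 16 * fifth_difference g i.
Proof.
  intros Hh. unfold reconR, reconL, Tj, Tk, cdxx, cdx, fifth_difference.
  replace (i + 1 + 1)%Z with (i + 2)%Z by ring.
  replace (i + 1 - 1)%Z with i by ring.
  replace (i + 2 + 1)%Z with (i + 3)%Z by ring.
  replace (i + 2 - 1)%Z with (i + 1)%Z by ring.
  replace (i - 1 + 1)%Z with i by ring.
  replace (i - 1 - 1)%Z with (i - 2)%Z by ring.
  field. exact Hh.
Qed.

Lemma nodal_0 u x h : nodal u x h 0 = u x.
Proof. unfold nodal. now rewrite Rmult_0_l, Rplus_0_r. Qed.

Lemma residual_stencil_form u f Dbar kappa theta theta3 x h :
  (forall a b, Dbar a b = Dbar b a) -> h <> 0 ->
  residual u f Dbar kappa (kappa - 1) theta theta3 x h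
  = (flux_stencil theta theta3 (fun m => f (nodal u x h m))
     - (1 - kappa) / 32
       * (Dbar (u x) (nodal u x h 1) * fifth_difference (nodal u x h) 0
          - Dbar (u x) (nodal u x h (-1)) * fifth_difference (nodal u x h) (-1))) / h.
Proof.
  intros Hsym Hh.
  rewrite <- (recon_average_difference theta theta3 h _ Hh).
  unfold residual, numflux. simpl Z.add.
  rewrite !recon_jump_fifth_difference by exact Hh.
  rewrite (Hsym _ (nodal u x h 0)), nodal_0.
  field. exact Hh.
Qed.

Lemma flux_stencil_taylor theta theta3 d h :
  flux_stencil theta theta3 (fun m => taylor_poly d 6 (IZR m * h))
  = d 1%nat * h + (3 * theta - 1) / 12 * d 3%nat * h ^ 3
    + (15 * (theta - theta3) - 13) / 240 * d 5%nat * h ^ 5.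
Proof.
  unfold flux_stencil, taylor_poly. cbn [sum_f_R0].
  rewrite !INR_IZR_INZ. simpl Z.of_nat. field.
Qed.

Lemma fifth_difference_taylor d h i :
  fifth_difference (fun m => taylor_poly d 6 (IZR m * h)) i
  = d 5%nat * h ^ 5 + (2 * IZR i + 1) / 2 * d 6%nat * h ^ 6.
Proof.
  unfold fifth_difference, taylor_poly. cbn [sum_f_R0].
  rewrite !plus_IZR, !minus_IZR, !INR_IZR_INZ. simpl Z.of_nat. field.
Qed.

(* [bigO_h_minus] must be tried before [bigO_h_plus], which also matches [a - b]. *)
Ltac bigO_h_linear H :=
  repeat first [ apply H | apply bigO_h_minus | apply bigO_h_plus | apply bigO_h_scal ].

Lemma flux_stencil_bigO theta theta3 (g g0 : R -> Z -> R) p :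
  (forall m, bigO_h (fun h => g h m - g0 h m) p) ->
  bigO_h (fun h => flux_stencil theta theta3 (g h) - flux_stencil theta theta3 (g0 h)) p.
Proof.
  intros Hg.
  apply bigO_h_ext with (fun h =>
      (3 / 4 - theta / 4 - 5 * theta3 / 32)
        * ((g h 1%Z - g0 h 1%Z) - (g h (-1)%Z - g0 h (-1)%Z))
    + (theta + theta3 - 1) / 8 * ((g h 2%Z - g0 h 2%Z) - (g h (-2)%Z - g0 h (-2)%Z))
    - theta3 / 32 * ((g h 3%Z - g0 h 3%Z) - (g h (-3)%Z - g0 h (-3)%Z))).
  { intros h _. unfold flux_stencil. ring. }
  bigO_h_linear Hg.
Qed.

Lemma fifth_difference_bigO (g g0 : R -> Z -> R) i p :
  (forall m, bigO_h (fun h => g h m - g0 h m) p) ->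
  bigO_h (fun h => fifth_difference (g h) i - fifth_difference (g0 h) i) p.
Proof.
  intros Hg.
  apply bigO_h_ext with (fun h =>
      (g h (i + 3)%Z - g0 h (i + 3)%Z) - 5 * (g h (i + 2)%Z - g0 h (i + 2)%Z)
    + 10 * (g h (i + 1)%Z - g0 h (i + 1)%Z) - 10 * (g h i - g0 h i)
    + 5 * (g h (i - 1)%Z - g0 h (i - 1)%Z) - (g h (i - 2)%Z - g0 h (i - 2)%Z)).
  { intros h _. unfold fifth_difference. ring. }
  bigO_h_linear Hg.
Qed.

Lemma residual_expansion u f D Dbar kappa theta theta3 x :
  smooth1 u -> smooth1 f -> smooth2 Dbar ->
  (forall a b, Dbar a b = Dbar b a) -> (forall v, Dbar v v = D v) ->
  bigO_h (fun h =>
    residual u f Dbar kappa (kappa - 1) theta theta3 x h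
    - ( Derive_n (fun y => f (u y)) 1 x
      + (3 * theta - 1) / 12 * Derive_n (fun y => f (u y)) 3 x * h ^ 2
      + (15 * (theta - theta3) - 13) / 240 * Derive_n (fun y => f (u y)) 5 x * h ^ 4
      + (kappa - 1) / 32
        * (Derive (fun y => D (u y)) x * Derive_n u 5 x + D (u x) * Derive_n u 6 x)
        * h ^ 5)) 6.
Proof.
  intros Hu Hf HDbar Hsym Hdiag.
  set (g := fun y => f (u y)).
  set (dg := fun k => Derive_n g k x). set (du := fun k => Derive_n u k x).
  set (Dx := Derive (fun y => D (u y)) x).
  assert (Hnodal : forall G, smooth1 G -> forall m : Z, bigO_h (fun h =>
      nodal G x h m - taylor_poly (fun k => Derive_n G k x) 6 (IZR m * h)) 7).
  { intros G HG m. exact (taylor_poly_bigO G 6 (IZR m) x HG). }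
  assert (Hflux := flux_stencil_bigO theta theta3 (fun h => nodal g x h)
    (fun h m => taylor_poly dg 6 (IZR m * h)) 7 (Hnodal g (smooth1_comp f u Hf Hu))).
  assert (Hjump := fun i => fifth_difference_bigO (fun h => nodal u x h)
    (fun h m => taylor_poly du 6 (IZR m * h)) i 7 (Hnodal u Hu)).
  assert (Hdiss := Dbar_comp_bigO Dbar D HDbar Hsym Hdiag u Hu x).
  assert (Hdiss_approx : forall c, bigO_h (fun h => D (u x) + c * h * (Dx / 2)) 0).
  { intros c. apply bigO_h_ext with (fun h => D (u x) * h ^ 0 + (c * (Dx / 2)) * h ^ 1).
    { intros h _. ring. }
    apply bigO_h_plus; apply bigO_h_monomial; lia. }
  assert (Hjump_approx : forall i, bigO_h (fun h =>
      fifth_difference (fun m => taylor_poly du 6 (IZR m * h)) i) 5).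
  { intros i. apply bigO_h_ext with
      (fun h => du 5%nat * h ^ 5 + ((2 * IZR i + 1) / 2 * du 6%nat) * h ^ 6).
    { intros h _. rewrite fifth_difference_taylor. ring. }
    apply bigO_h_plus; apply bigO_h_monomial; lia. }
  apply bigO_h_ext with (fun h =>
    ((flux_stencil theta theta3 (fun m => f (nodal u x h m))
      - flux_stencil theta theta3 (fun m => taylor_poly dg 6 (IZR m * h)))
     - (1 - kappa) / 32 *
       ((Dbar (u x) (nodal u x h 1) * fifth_difference (nodal u x h) 0
         - (D (u x) + IZR 1 * h * (Dx / 2))
           * fifth_difference (fun m => taylor_poly du 6 (IZR m * h)) 0)
      - (Dbar (u x) (nodal u x h (-1)) * fifth_difference (nodal u x h) (-1)
         - (D (u x) + IZR (-1) * h * (Dx / 2))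
           * fifth_difference (fun m => taylor_poly du 6 (IZR m * h)) (-1)))) / h).
  { intros h Hh. rewrite residual_stencil_form by (assumption || lra).
    rewrite flux_stencil_taylor, !fifth_difference_taylor.
    unfold dg, du, Dx, g. field. lra. }
  apply bigO_h_div, bigO_h_minus; [exact Hflux|].
  apply bigO_h_scal, bigO_h_minus; apply (bigO_h_mult_approx _ _ _ _ 2 5);
    auto; [exact (Hdiss (IZR 1))|exact (Hdiss (IZR (-1)))].
Qed.

Theorem mainTheorem4
  (u f D : R -> R) (Dbar : R -> R -> R) (kappa kappa3 : R)
  (Hu : smooth1 u) (Hf : smooth1 f) (HD : smooth1 D)
  (HDbar : smooth2 Dbar)
  (Hsym : forall a b, Dbar a b = Dbar b a)
  (Hdiag : forall v, Dbar v v = D v)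
  (Hk3 : kappa3 = kappa - 1) :
  (forall (theta theta3 x : R),
     bigO_h (fun h =>
       residual u f Dbar kappa kappa3 theta theta3 x h
       - ( Derive_n (fun y => f (u y)) 1 x
         + (3 * theta - 1) / 12 * Derive_n (fun y => f (u y)) 3 x * h ^ 2
         + (15 * (theta - theta3) - 13) / 240
             * Derive_n (fun y => f (u y)) 5 x * h ^ 4
         + (kappa - 1) / 32
             * (Derive (fun y => D (u y)) x * Derive_n u 5 x
                + D (u x) * Derive_n u 6 x) * h ^ 5)) 6)
  /\
  (forall x : R,
     bigO_h (fun h =>
       residual u f Dbar kappa kappa3 (1 / 3) (- (8 / 15)) x h
       - Derive_n (fun y => f (u y)) 1 x) 5)
  /\
  ((forall v, D v = 0) ->
   forall x : R,
     bigO_h (fun h =>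
       residual u f Dbar kappa kappa3 (1 / 3) (- (8 / 15)) x h
       - Derive_n (fun y => f (u y)) 1 x) 6).
Proof.
  subst kappa3.
  pose proof (fun theta theta3 x =>
    residual_expansion u f D Dbar kappa theta theta3 x Hu Hf HDbar Hsym Hdiag) as Hexp.
  split; [exact Hexp|split].
  - intros x.
    set (K := (kappa - 1) / 32 * (Derive (fun y => D (u y)) x * Derive_n u 5 x
                                  + D (u x) * Derive_n u 6 x)).
    eapply bigO_h_ext; [|apply bigO_h_plus;
      [apply (bigO_h_le _ 6); [lia|exact (Hexp (1 / 3) (- (8 / 15)) x)]
      |exact (bigO_h_monomial K 5 5 (Nat.le_refl 5))]].
    intros h _. unfold K. field.
  - intros HD0 x.
    assert (HDu' : Derive (fun y => D (u y)) x = 0).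
    { rewrite (Derive_ext _ (fun _ => 0)) by (intros; apply HD0). apply Derive_const. }
    eapply bigO_h_ext; [|exact (Hexp (1 / 3) (- (8 / 15)) x)].
    intros h _. rewrite HDu', HD0. field.
Qed.
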